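(* There is an $\omega$-language that is PPBA-recognizable but not RPBA-recognizable.
   Context: A Parikh automaton of dimension $d$ is $\mathcal{A}=(Q,\Sigma,q_0,\Delta,F,C)$ with finite $Q$, $q_0\in Q$, $F\subseteq Q$, finite $\Delta\subseteq Q\times\Sigma\times\mathbb{N}^d\times Q$ and semi-linear $C\subseteq\mathbb{N}^d$ (a finite union of sets $\{b_0+\sum_{j=1}^\ell b_jz_j\mid z_j\in\mathbb{N}\}$, $b_j\in\mathbb{N}^d$). A run on an infinite word $\alpha$ is $r_1r_2\cdots$ with $r_i=(p_{i-1},\alpha_i,\mathbf{v}_i,p_i)\in\Delta$, $p_0=q_0$, and $\rho(r_1\cdots r_i)=\sum_{k\le i}\mathbf{v}_k$. For an RPBA (reachability Parikh–Büchi automaton) the run is accepting if there is $i\ge1$ with $p_i\in F$ and $\rho(r_1\cdots r_i)\in C$, and there are infinitely many $j$ with $p_j\in F$. For a PPBA (prefix Parikh–Büchi automaton) the run is accepting if there are infinitely many $i\ge1$ with $p_i\in F$ and $\rho(r_1\cdots r_i)\in C$. An $\omega$-language is X-recognizable if it equals the set of infinite words with an accepting run of some automaton of type X. *)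

From mathcomp Require Import all_boot.
Set Implicit Arguments. Unset Strict Implicit. Unset Printing Implicit Defensive.

Definition vec (d : nat) := {ffun 'I_d -> nat}.

Definition vadd d (u v : vec d) : vec d := [ffun i => u i + v i].
Definition vscale d (z : nat) (v : vec d) : vec d := [ffun i => z * v i].

(* A linear set {b0 + sum_j z_j b_j | z_j in N}, given by base b0 and periods. *)
Fixpoint in_linear d (b0 : vec d) (ps : seq (vec d)) (v : vec d) : Prop :=
  match ps with
  | [::] => v = b0
  | p :: ps' => exists z : nat, in_linear (vadd b0 (vscale z p)) ps' v
  end.

Definition semilinear d := seq (vec d * seq (vec d)).

Definition in_semilinear d (C : semilinear d) (v : vec d) : Prop :=
  exists2 l, l \in C & in_linear l.1 l.2 v.

Record PA (Sigma : finType) := mkPA {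
  pa_Q : finType;
  pa_dim : nat;
  pa_q0 : pa_Q;
  pa_delta : seq (pa_Q * Sigma * vec pa_dim * pa_Q);
  pa_F : {set pa_Q};
  pa_C : semilinear pa_dim
}.

Section Runs.
Variables (Sigma : finType) (A : PA Sigma).

Definition trans := (pa_Q A * Sigma * vec (pa_dim A) * pa_Q A)%type.
Definition tsrc (t : trans) : pa_Q A := t.1.1.1.
Definition tlet (t : trans) : Sigma := t.1.1.2.
Definition tvec (t : trans) : vec (pa_dim A) := t.1.2.
Definition ttgt (t : trans) : pa_Q A := t.2.

(* r k is the transition r_{k+1} = (p_k, alpha_{k+1}, v_{k+1}, p_{k+1});
   words are indexed from 0: alpha k is the (k+1)-th letter. *)
Definition is_run (alpha : nat -> Sigma) (r : nat -> trans) : Prop :=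
  tsrc (r 0) = pa_q0 A /\
  (forall k, r k \in pa_delta A) /\
  (forall k, tlet (r k) = alpha k) /\
  (forall k, ttgt (r k) = tsrc (r k.+1)).

Definition rho (r : nat -> trans) (i : nat) : vec (pa_dim A) :=
  [ffun j => \sum_(k < i) tvec (r k) j].

(* state p_i for i >= 1 is ttgt (r (i-1)) *)
Definition RPBA_accepting (r : nat -> trans) : Prop :=
  (exists k, ttgt (r k) \in pa_F A /\ in_semilinear (pa_C A) (rho r k.+1)) /\
  (forall N, exists2 k, N <= k & ttgt (r k) \in pa_F A).

Definition PPBA_accepting (r : nat -> trans) : Prop :=
  forall N, exists2 k, N <= k &
    ttgt (r k) \in pa_F A /\ in_semilinear (pa_C A) (rho r k.+1).

Definition RPBA_accepts (alpha : nat -> Sigma) : Prop :=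
  exists r, is_run alpha r /\ RPBA_accepting r.
Definition PPBA_accepts (alpha : nat -> Sigma) : Prop :=
  exists r, is_run alpha r /\ PPBA_accepting r.
End Runs.

Definition RPBA_recognizable (Sigma : finType) (L : (nat -> Sigma) -> Prop) :=
  exists A : PA Sigma, forall alpha, L alpha <-> RPBA_accepts A alpha.
Definition PPBA_recognizable (Sigma : finType) (L : (nat -> Sigma) -> Prop) :=
  exists A : PA Sigma, forall alpha, L alpha <-> PPBA_accepts A alpha.

(* A word over {true, false} (read: {a, b}) is in the language iff infinitely
   many of its prefixes contain as many a's as b's.  A PPBA recognizes it by
   counting both letters and asking infinitely often for a count on the
   diagonal {(z, z)}.

   Suppose an RPBA with state set Q recognized it, and run it on
   (a^N b^N)^omega with N = |Q| + 1.  The reachability condition is met at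
   some point k; afterwards the run visits F infinitely often, so two visits
   after k, far enough apart, end in the same state: the segment between them
   is a loop through F that contains a whole block a^N, inside which some
   state repeats.  Iterating the big loop forever, with or without one extra
   copy of the small a-loop, gives two accepted ultimately periodic words.
   Their periods have a-counts c and c + d for lengths L and L + d, so at most
   one of them has a balanced period; the other one drifts away from balance
   linearly and is not in the language. *)

From mathcomp Require Import all_boot zify.
Set Implicit Arguments. Unset Strict Implicit. Unset Printing Implicit Defensive.

Definition io_balanced (u : nat -> bool) : Prop :=
  forall M, exists2 n, M <= n & count u (iota 0 n) = count (predC u) (iota 0 n).

Lemma count_iota_periodic (u : nat -> bool) P L q :
  (forall n, P <= n -> u (n + L) = u n) ->
  count u (iota P (q * L)) = q * count u (iota P L).
Proof.
move=> per; elim: q => [|q IH]; first by rewrite !mul0n.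
rewrite mulSn iotaD count_cat (addnC P) iotaDl count_map mulSn -IH.
congr (_ + _); apply: eq_in_count => n; rewrite mem_iota => /andP[le_Pn _] /=.
by rewrite addnC per.
Qed.

Lemma not_io_balanced_periodic (u : nat -> bool) P L :
  0 < L -> (forall n, P <= n -> u (n + L) = u n) ->
  (count u (iota P L)).*2 != L -> ~ io_balanced u.
Proof.
move=> L_gt0 per /eqP unbal /(_ (P + (P + L) * L)) [n le_n bal_n].
have twice_n : (count u (iota 0 n)).*2 = n.
  by rewrite -addnn {2}bal_n count_predC size_iota.
set q := (n - P) %/ L; set y := (n - P) %% L.
have n_eq : n = P + (q * L + y) by rewrite -divn_eq; lia.
have le_q : P + L <= q by rewrite leq_divRL //; lia.
have lt_yL : y < L by rewrite ltn_pmod.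
move: twice_n; rewrite n_eq iotaD add0n iotaD !count_cat count_iota_periodic //.
have := count_size u (iota 0 P); have := count_size u (iota (P + q * L) y).
(* With c := count u (iota P L), the q full periods are off balance by
   q * |2c - L| >= q > P + y, more than the prefix and the last partial
   period can compensate. *)
rewrite !size_iota; nia.
Qed.

Definition blocks N n := n %% (N + N) < N.

Lemma io_balanced_blocks N : 0 < N -> io_balanced (blocks N).
Proof.
move=> N_gt0 M; exists (M * (N + N)); first by rewrite leq_pmulr ?addn_gt0 ?N_gt0.
have per n : 0 <= n -> blocks N (n + (N + N)) = blocks N n.
  by rewrite /blocks modnDr.
have period : count (blocks N) (iota 0 (N + N)) = N.
  have ones : count (blocks N) (iota 0 N) = N.
    rewrite -[RHS](size_iota 0 N) -count_predT; apply: eq_in_count => n.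
    by rewrite mem_iota /blocks /= => lt_nN; rewrite modn_small //; lia.
  have zeros : count (blocks N) (iota N N) = 0.
    rewrite -(count_pred0 (iota N N)); apply: eq_in_count => n.
    by rewrite mem_iota /blocks /= => /andP[le_Nn lt_n]; rewrite modn_small; lia.
  by rewrite iotaD count_cat ones add0n zeros addn0.
have := count_predC (blocks N) (iota 0 (M * (N + N))).
rewrite size_iota count_iota_periodic // period; lia.
Qed.

Lemma pigeonhole_nat (T : finType) (f : nat -> T) :
  exists i j, [/\ i < j, j <= #|T| & f i = f j].
Proof.
have /injectivePn [x [y neq_xy eq_f]] : ~~ injectiveb (fun i : 'I_#|T|.+1 => f i).
  by apply/injectiveP => /leq_card; rewrite card_ord ltnn.
have [lt_xy | lt_yx | eq_xy] := ltngtP x y.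
- by exists x, y; split; rewrite // -ltnS.
- by exists y, x; split; rewrite // -ltnS.
- by move: neq_xy; rewrite (val_inj eq_xy) eqxx.
Qed.

Lemma cofinal_pigeonhole (T : finType) (S : pred nat) (f : nat -> T) m gap :
  (forall N, exists2 n, N <= n & S n) ->
  exists i j, [/\ m <= i, i + gap <= j, S i, S j & f i = f j].
Proof.
move=> cofinal.
have exS x : exists n, (x <= n) && S n.
  by have [n le_n Sn] := cofinal x; exists n; rewrite le_n Sn.
pose next x := ex_minn (exS x).
have nextP x : x <= next x /\ S (next x) by rewrite /next; case: ex_minnP => n /andP[].
pose e t := iter t (fun x => next (x + gap)) (next m).
have e_step t : e t + gap <= e t.+1 := (nextP _).1.
have e_S t : S (e t) by case: t => [|t]; exact: (nextP _).2.
have e_mono : {homo e : i j / i <= j}.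
  apply: homo_leq => [//|y x z|t]; first exact: leq_trans.
  exact: leq_trans (leq_addr _ _) (e_step t).
have [i [j [lt_ij _ eq_f]]] := pigeonhole_nat (f \o e).
exists (e i), (e j); split=> //.
- exact: leq_trans (nextP m).1 (e_mono 0 i isT).
- exact: leq_trans (e_step i) (e_mono _ _ lt_ij).
Qed.

Definition pump_index a b n := if n < b then n else n - (b - a).

Lemma pump_index_small a b n : n < b -> pump_index a b n = n.
Proof. by rewrite /pump_index => ->. Qed.

Lemma pump_index_shift a b m : a <= m -> pump_index a b (b - a + m) = m.
Proof. by move=> le_am; rewrite /pump_index ifF; lia. Qed.

Definition lasso_index P L n := if n < P then n else P + (n - P) %% L.

Lemma lasso_index_small P L n : n < P -> lasso_index P L n = n.
Proof. by rewrite /lasso_index => ->. Qed.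

Lemma lasso_index_loop P L q x : x < L -> lasso_index P L (P + (q * L + x)) = P + x.
Proof. by move=> lt_xL; rewrite /lasso_index ifF ?addKn ?modnMDl ?modn_small //; lia. Qed.

Lemma lasso_index_periodic P L n :
  P <= n -> lasso_index P L (n + L) = lasso_index P L n.
Proof.
move=> le_Pn; rewrite /lasso_index !ifF; try lia.
have -> : n + L - P = n - P + L by lia.
by rewrite modnDr.
Qed.

Lemma map_pump_iota a b m n :
  a <= m -> map (pump_index a b) (iota (b - a + m) n) = iota m n.
Proof.
move=> le_am; rewrite iotaDl -map_comp -[RHS]map_id; apply/eq_in_map => i.
by rewrite mem_iota => /andP[le_mi _] /=; apply: pump_index_shift; exact: leq_trans le_mi.
Qed.

Lemma count_pump (v : nat -> bool) P a b E :
  P <= a -> a <= b -> b <= E.+1 ->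
  count (v \o pump_index a b) (iota P ((b - a + E).+1 - P)) =
  count v (iota P (E.+1 - P)) + count v (iota a (b - a)).
Proof.
move=> le_Pa le_ab le_bE.
have -> : (b - a + E).+1 - P = b - P + (b - a + (E.+1 - b)) by lia.
have -> : E.+1 - P = b - P + (E.+1 - b) by lia.
rewrite -count_map !iotaD !map_cat !count_cat.
have -> : P + (b - P) = b - a + a by lia.
rewrite map_pump_iota // -addnA map_pump_iota; last lia.
have -> : a + (b - a) = b by lia.
have -> : map (pump_index a b) (iota P (b - P)) = iota P (b - P).
  rewrite -[RHS]map_id; apply/eq_in_map => i; rewrite mem_iota => /andP[_ lt_ib].
  by apply: pump_index_small; lia.
by rewrite subnK // addnA addnAC.
Qed.

Lemma not_io_balanced_lasso (v : nat -> bool) P L :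
  (count v (iota P L)).*2 != L -> ~ io_balanced (v \o lasso_index P L).
Proof.
move=> unbal; have L_gt0 : 0 < L by move: unbal; case: L.
apply: (not_io_balanced_periodic (P := P) L_gt0).
  by move=> n le_Pn /=; rewrite lasso_index_periodic.
rewrite (@eq_in_count _ _ v) //= => i; rewrite mem_iota => /andP[le_Pi lt_iL] /=.
by rewrite /lasso_index ifF ?modn_small ?subnKC //; lia.
Qed.

Section RunSurgery.
Variables (Sigma : finType) (A : PA Sigma).

Definition parikh_accept_at (r : nat -> trans A) k :=
  ttgt (r k) \in pa_F A /\ in_semilinear (pa_C A) (rho r k.+1).

Variables (al : nat -> Sigma) (r : nat -> trans A).
Hypothesis r_run : is_run al r.

Lemma run_next n : ttgt (r n) = tsrc (r n.+1).
Proof. by case: r_run => _ [_ []]. Qed.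

Lemma is_run_reindex (h : nat -> nat) :
  h 0 = 0 -> (forall n, tsrc (r (h n.+1)) = tsrc (r (h n).+1)) ->
  is_run (al \o h) (r \o h).
Proof.
case: r_run => r_q0 [r_delta [r_let _]] h0 h_step.
split; first by rewrite /= h0.
split; first by move=> n; exact: r_delta.
split; first by move=> n; exact: r_let.
by move=> n /=; rewrite run_next h_step.
Qed.

Lemma parikh_accept_at_reindex (h : nat -> nat) k :
  (forall i, i <= k -> h i = i) -> parikh_accept_at r k -> parikh_accept_at (r \o h) k.
Proof.
move=> h_id [F_k C_k]; rewrite /parikh_accept_at /= h_id //; split=> //.
suff -> : rho (r \o h) k.+1 = rho r k.+1 by [].
by apply/ffunP => j; rewrite !ffunE; apply: eq_bigr => i _ /=; rewrite h_id // -ltnS.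
Qed.

Lemma is_run_pump a b :
  a <= b -> tsrc (r a) = tsrc (r b) -> is_run (al \o pump_index a b) (r \o pump_index a b).
Proof.
move=> le_ab loop; apply: is_run_reindex => [|n]; first by rewrite /pump_index sub0n if_same.
rewrite /pump_index; case: (ltnP n.+1 b) => [lt_n1b | le_bn1]; first by rewrite ifT // ltnW.
case: ltnP => [lt_nb | le_bn].
  have eq_b : n.+1 = b by lia.
  by rewrite eq_b subKn.
by rewrite subSn //; lia.
Qed.

Lemma is_run_lasso P L :
  0 < L -> tsrc (r P) = tsrc (r (P + L)) ->
  is_run (al \o lasso_index P L) (r \o lasso_index P L).
Proof.
move=> L_gt0 loop; apply: is_run_reindex => [|n].
  by rewrite /lasso_index sub0n mod0n addn0; case: (P).
case: (ltnP n P) => [lt_nP | le_Pn].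
  rewrite (lasso_index_small L lt_nP); case: (ltnP n.+1 P) => [lt_n1P | le_Pn1].
    by rewrite lasso_index_small.
  have eq_P : n.+1 = P by lia.
  by rewrite eq_P /lasso_index ltnn subnn mod0n addn0.
have [q [x [lt_xL ->]]] : exists q x, x < L /\ n = P + (q * L + x).
  by exists ((n - P) %/ L), ((n - P) %% L); rewrite ltn_pmod // -divn_eq; split; lia.
rewrite lasso_index_loop // -!addnS; case: (ltnP x.+1 L) => [lt_x1L | le_Lx1].
  by rewrite lasso_index_loop.
have eq_L : x.+1 = L by lia.
by rewrite eq_L -[q * L + L]addn0 -mulSnr lasso_index_loop // addn0.
Qed.

Lemma RPBA_accepts_lasso P L k m :
  k < P -> parikh_accept_at r k -> P <= m < P + L -> ttgt (r m) \in pa_F A ->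
  tsrc (r P) = tsrc (r (P + L)) -> RPBA_accepts A (al \o lasso_index P L).
Proof.
move=> lt_kP acc_k /andP[le_Pm lt_mL] F_m loop.
exists (r \o lasso_index P L); split; first by apply: is_run_lasso => //; lia.
split.
  by exists k; apply: parikh_accept_at_reindex acc_k => i le_ik; apply: lasso_index_small; lia.
move=> N; exists (P + (N * L + (m - P))); first by nia.
by rewrite /= lasso_index_loop ?subnKC //; lia.
Qed.

End RunSurgery.

Lemma unbalanced_RPBA_accepts (A : PA bool) al (r : nat -> trans A) k P a b E :
  is_run al r -> parikh_accept_at r k -> ttgt (r E) \in pa_F A ->
  k < P -> P <= a -> a < b -> b <= E.+1 ->
  tsrc (r P) = tsrc (r E.+1) -> tsrc (r a) = tsrc (r b) ->
  (forall i, a <= i < b -> al i) ->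
  exists2 u, RPBA_accepts A u & ~ io_balanced u.
Proof.
move=> r_run acc_k F_E lt_kP le_Pa lt_ab le_bE loop_PE loop_ab ones_ab.
(* If the big loop is balanced, pumping the a-loop once unbalances it. *)
have [unbal | /negPn/eqP bal] := boolP ((count al (iota P (E.+1 - P))).*2 != E.+1 - P).
  exists (al \o lasso_index P (E.+1 - P)); last exact: not_io_balanced_lasso.
  by apply: (RPBA_accepts_lasso r_run lt_kP acc_k _ F_E); rewrite subnKC //; lia.
have ones : count al (iota a (b - a)) = b - a.
  rewrite -[RHS](size_iota a) -count_predT; apply: eq_in_count => i.
  by rewrite mem_iota subnKC => [/ones_ab|]; last exact: ltnW.
have r1_run := is_run_pump r_run (ltnW lt_ab) loop_ab.
exists ((al \o pump_index a b) \o lasso_index P ((b - a + E).+1 - P)).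
  apply: (RPBA_accepts_lasso r1_run lt_kP _ (m := b - a + E)).
  - by apply: parikh_accept_at_reindex acc_k => i le_ik; apply: pump_index_small; lia.
  - lia.
  - by rewrite /= pump_index_shift //; lia.
  - rewrite subnKC /=; last lia.
    rewrite -addnS pump_index_shift; last lia.
    by rewrite pump_index_small; last lia.
apply: not_io_balanced_lasso; rewrite count_pump ?ones //; lia.
Qed.

Lemma RPBA_accepts_blocks_unbalanced (A : PA bool) :
  RPBA_accepts A (blocks #|pa_Q A|.+1) -> exists2 u, RPBA_accepts A u & ~ io_balanced u.
Proof.
set N := #|pa_Q A|.+1; case=> r [r_run [[k acc_k] F_inf]].
(* The gap 3 * N leaves room, between the two F-visits, for the block a^N
   starting at the first multiple c of 2 * N after them. *)
have [i [j [le_ki le_ij _ F_j same_ij]]] :=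
  cofinal_pigeonhole (fun n => ttgt (r n)) k (3 * N) F_inf.
set c := (i.+1 %/ (N + N)).+1 * (N + N).
have lt_ic : i.+1 < c by apply: ltn_ceil.
have le_c : c <= i.+1 + (N + N) by rewrite /c mulSn addnC leq_add2r leq_divM.
have [s [t [lt_st le_tQ same_st]]] := pigeonhole_nat (fun x => tsrc (r (c + x))).
apply: (unbalanced_RPBA_accepts r_run acc_k F_j (P := i.+1) (a := c + s) (b := c + t))
  => //; try lia.
  by rewrite -!(run_next r_run).
move=> y /andP[le_y lt_y]; rewrite /blocks -(subnKC (leq_trans (leq_addr s c) le_y)).
by rewrite modnMDl modn_small; lia.
Qed.

Lemma io_balanced_not_RPBA : ~ RPBA_recognizable io_balanced.
Proof.
case=> A accepts.
have /accepts/RPBA_accepts_blocks_unbalanced [u u_acc u_unbal] :=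
  io_balanced_blocks (ltn0Sn #|pa_Q A|).
exact/u_unbal/accepts.
Qed.

Lemma sum_ord_count (p : pred nat) n : \sum_(k < n) p k = count p (iota 0 n).
Proof.
rewrite -(big_mkord predT (fun k => nat_of_bool (p k))) -sumn_count sumnE big_map.
by rewrite /index_iota subn0.
Qed.

Definition letter_vec (x : bool) : vec 2 :=
  [ffun i => if i == ord0 then nat_of_bool x else nat_of_bool (~~ x)].

Definition balance_PA : PA bool :=
  @mkPA bool unit 2 tt [seq (tt, x, letter_vec x, tt) | x <- [:: true; false]] setT
    [:: ([ffun => 0], [:: [ffun => 1]])].

Lemma balance_PA_rho al (r : nat -> trans balance_PA) n : is_run al r ->
  rho r n = [ffun i => if i == ord0 then count al (iota 0 n) else count (predC al) (iota 0 n)].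
Proof.
case=> _ [r_delta [r_let _]].
have tvec_r k : tvec (r k) = letter_vec (al k).
  by rewrite -r_let; case/mapP: (r_delta k) => x _ ->.
apply/ffunP => i; rewrite !ffunE.
under eq_bigr => k _ do rewrite tvec_r ffunE.
by case: (i == ord0); [exact: (sum_ord_count al) | exact: (sum_ord_count (predC al))].
Qed.

Lemma balance_PA_accept_at al (r : nat -> trans balance_PA) n : is_run al r ->
  parikh_accept_at r n <-> count al (iota 0 n.+1) = count (predC al) (iota 0 n.+1).
Proof.
move=> r_run; rewrite /parikh_accept_at /in_semilinear (balance_PA_rho _ r_run) inE.
split=> [[_ [l]] | bal].
  rewrite inE => /eqP -> [z /ffunP rho_z] /=.
  by move: (rho_z ord0) (rho_z ord_max); rewrite !ffunE /= => ->.
split=> //; exists ([ffun => 0], [:: [ffun => 1]]); rewrite ?inE //.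
exists (count al (iota 0 n.+1)); apply/ffunP => i; rewrite !ffunE.
by case: (i == ord0); rewrite add0n muln1.
Qed.

Lemma io_balanced_PPBA : PPBA_recognizable io_balanced.
Proof.
exists balance_PA => al; split=> [bal | [r [r_run acc]] M].
  pose r n : trans balance_PA := (tt, al n, letter_vec (al n), tt).
  have r_run : is_run al r.
    split=> //; split=> [n|]; last by split.
    by apply/mapP; exists (al n); first by case: (al n).
  exists r; split=> // N; have [n le_n bal_n] := bal N.+1.
  exists n.-1; first by rewrite -ltnS (ltn_predK le_n).
  by apply/(balance_PA_accept_at _ r_run); rewrite (ltn_predK le_n).
have [k le_k acc_k] := acc M.
by exists k.+1; [exact: leqW | exact/(balance_PA_accept_at _ r_run)].
Qed.

Theorem lemma3 :
  exists (Sigma : finType) (L : (nat -> Sigma) -> Prop),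
    PPBA_recognizable L /\ ~ RPBA_recognizable L.
Proof. by exists bool, io_balanced; split; [exact: io_balanced_PPBA | exact: io_balanced_not_RPBA]. Qed.
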